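(* Let $k$ be a field and $\mathcal{R}=\mathrm{RCFM}(k)$. There are short exact sequences (extensions) of right $\mathcal{R}$-modules $$0\to\mathcal{A}\to\mathcal{B}\to\mathcal{C}\to0\qquad\text{and}\qquad 0\to\mathcal{R}\to\mathcal{B}_\infty\to\mathcal{C}_\infty\to0.$$
   Context: $\mathcal{R}=\mathrm{RCFM}(k)$ is the $k$-algebra of $\mathbb{N}_0\times\mathbb{N}_0$ row-column-finite matrices over $k$. $\mathsf{A}$: $\mathsf{a}_{i+1,i}=1$ ($i\in\mathbb{N}_0$), other entries $0$; $\mathsf{B}$: $\mathsf{b}_{\frac{n(n+1)}{2}+i,\frac{(n-1)n}{2}+i}=1$ ($n>0$, $0\le i<n$), other entries $0$. $\mathcal{A}=\mathcal{R}/\mathsf{A}\mathcal{R}$, $\mathcal{B}=\mathcal{R}/(\mathsf{I}-\mathsf{A})\mathcal{R}$, $\mathcal{C}=\mathcal{R}/(\mathsf{I}-\mathsf{A}^t)\mathcal{R}$, $\mathcal{B}_\infty=\mathcal{R}/(\mathsf{I}-\mathsf{B})\mathcal{R}$, $\mathcal{C}_\infty=\mathcal{R}/(\mathsf{I}-\mathsf{B}^t)\mathcal{R}$. *)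

From HB Require Import structures.
From mathcomp Require Import all_boot all_order all_algebra.
From Stdlib Require Import ClassicalEpsilon.
Set Implicit Arguments. Unset Strict Implicit. Unset Printing Implicit Defensive.
Import GRing.Theory.
Local Open Scope ring_scope.

Section RCFM.
Variable k : fieldType.

(* N_0 x N_0 matrices over k, as functions (row index first). *)
Definition nmx := nat -> nat -> k.

Definition row_finite (M : nmx) : Prop :=
  forall i, exists N, forall j, (N <= j)%N -> M i j = 0.
Definition col_finite (M : nmx) : Prop :=
  forall j, exists N, forall i, (N <= i)%N -> M i j = 0.
Definition RCF (M : nmx) : Prop := row_finite M /\ col_finite M.

(* a bound beyond which row i of M vanishes (0 if none exists) *)
Definition rbound (M : nmx) (i : nat) : nat :=
  match excluded_middle_informative
          (exists N, forall j, (N <= j)%N -> M i j = 0) with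
  | left h => proj1_sig (constructive_indefinite_description _ h)
  | right _ => 0%N
  end.

(* matrix product (the sum (MN)_{ij} = sum_l M_{il} N_{lj} is finite
   since M is row-finite) *)
Definition nmxmul (M N : nmx) : nmx :=
  fun i j => \sum_(l < rbound M i) M i l * N l j.

Definition nmxadd (M N : nmx) : nmx := fun i j => M i j + N i j.
Definition nmxsub (M N : nmx) : nmx := fun i j => M i j - N i j.
Definition nmxtr (M : nmx) : nmx := fun i j => M j i.
Definition nmx0 : nmx := fun _ _ => 0.
Definition nmx1 : nmx := fun i j => if i == j then 1 else 0.

Definition mxA : nmx := fun i j => if i == j.+1 then 1 else 0.
(* B : b_{n(n+1)/2 + i, (n-1)n/2 + i} = 1 for n > 0, 0 <= i < n;
   note n(n+1)/2 = 'C(n.+1,2) and (n-1)n/2 = 'C(n,2), and such an n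
   satisfies n <= r for the row index r. *)
Definition mxB : nmx := fun r c =>
  if [exists n : 'I_r.+1, exists i : 'I_n,
        (0 < (n : nat))%N && (r == 'C(n.+1, 2) + i)%N && (c == 'C(n, 2) + i)%N]
  then 1 else 0.

Definition inRideal (x m : nmx) : Prop :=
  exists r, RCF r /\ forall i j, m i j = nmxmul x r i j.

(* m = n in the quotient right module R / xR *)
Definition eqmod (x m n : nmx) : Prop := inRideal x (nmxsub m n).

(* F : R -> R induces a homomorphism of right R-modules R/xR -> R/yR
   (F acts on representatives). *)
Definition quot_hom (x y : nmx) (F : nmx -> nmx) : Prop :=
  [/\ forall m, RCF m -> RCF (F m),
      forall m n, RCF m -> RCF n -> eqmod x m n -> eqmod y (F m) (F n),
      forall m n, RCF m -> RCF n -> eqmod y (F (nmxadd m n)) (nmxadd (F m) (F n))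
    & forall m r, RCF m -> RCF r -> eqmod y (F (nmxmul m r)) (nmxmul (F m) r)].

(* 0 -> R/xR --F--> R/yR --G--> R/zR -> 0 is a short exact sequence of
   right R-modules. *)
Definition short_exact (x y z : nmx) (F G : nmx -> nmx) : Prop :=
  [/\ quot_hom x y F, quot_hom y z G,
      forall m, RCF m -> inRideal y (F m) -> inRideal x m,
      (forall m, RCF m -> inRideal z (G (F m))) /\
      (forall n, RCF n -> inRideal z (G n) -> exists m, RCF m /\ eqmod y (F m) n)
    &
      forall n, RCF n -> exists m, RCF m /\ eqmod z (G m) n].

End RCFM.

From mathcomp Require Import all_boot all_order all_algebra zify.
From Stdlib Require Import ClassicalEpsilon Classical.
Set Implicit Arguments. Unset Strict Implicit. Unset Printing Implicit Defensive.
Import GRing.Theory.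
Local Open Scope ring_scope.

(* Both [A] and [B] are partial shifts: [x e_c = e_(s c)] for an injective [s] with
   [c < s c].  Since [(1 - x^t)(- x r) = (1 - x) r], the identity induces a surjection
   [R/(1-x)R -> R/(1-x^t)R].  Its kernel is spanned by the matrices supported on the
   heads of the [s]-chains, i.e. the rows outside the image of [s]: placing row [q] of
   [m] at the head of the [q]-th chain embeds [R/x0 R] onto it, where [x0 R] consists of
   the matrices whose chain-indexed rows vanish.  For [A] there is one chain and
   [x0 = A]; for [B] there is one chain per block and [x0 = 0]. *)

Section Product.
Variable k : fieldType.
Implicit Types (M N m r : nmx k) (f : nat -> k).

Lemma big_ord_trunc f K K' : (K <= K')%N -> (forall l, (K <= l)%N -> f l = 0) ->
  \sum_(l < K') f l = \sum_(l < K) f l.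
Proof.
move=> KK' f0; rewrite -!(big_mkord xpredT f) (big_cat_nat (leq0n K) KK') /=.
by rewrite [X in _ + X]big1_seq ?addr0 // => l; rewrite mem_iota => /andP[_ /andP[/f0]].
Qed.

Lemma nmxmulE M N i j K : (forall l, (K <= l)%N -> M i l = 0) ->
  nmxmul M N i j = \sum_(l < K) M i l * N l j.
Proof.
move=> MK; rewrite /nmxmul /rbound; case: excluded_middle_informative => [h|[]]; last by exists K.
case: (constructive_indefinite_description _ h) => K0 MK0 /=.
have vanish K1 : (forall l, (K1 <= l)%N -> M i l = 0) ->
    forall l, (K1 <= l)%N -> M i l * N l j = 0 by move=> M0 l /M0 ->; rewrite mul0r.
rewrite -(big_ord_trunc (leq_maxr K K0) (vanish _ MK0)).
exact: big_ord_trunc (leq_maxl K K0) (vanish _ MK).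
Qed.

Lemma sum_ord_delta f a K : (a < K)%N ->
  \sum_(l < K) (if (l : nat) == a then 1 else 0) * f l = f a.
Proof.
move=> aK; rewrite (bigD1 (Ordinal aK)) //= eqxx mul1r big1 ?addr0 // => l la.
by rewrite ifF ?mul0r //; apply: contraNF la => /eqP la; apply/eqP/val_inj.
Qed.

Lemma inRideal0 x m : (forall i j, m i j = 0) -> inRideal x m.
Proof.
move=> m0; exists (nmx0 k); split; first by split=> i; exists 0%N.
by move=> i j; rewrite m0 /nmxmul big1 // => l _; rewrite /nmx0 mulr0.
Qed.

Lemma RCF_opp r : RCF r -> RCF (fun i j => - r i j).
Proof.
by case=> [Rr Rc]; split=> i; [case: (Rr i) | case: (Rc i)] => N rN;
  exists N => j /rN ->; rewrite oppr0.
Qed.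

Lemma RCF_comp_rows r (g : nat -> nat) : (forall i, (i <= g i)%N) ->
  RCF r -> RCF (fun i j => r (g i) j).
Proof.
move=> g_ge [Rr Rc]; split=> i; first by case: (Rr (g i)) => N rN; exists N.
by case: (Rc i) => N rN; exists N => l Nl; apply/rN/(leq_trans Nl).
Qed.

Lemma RCF_row_select r r' (h : nat -> nat) : RCF r ->
  (forall i, (exists2 q, h q = i & forall j, r' i j = r q j) \/ forall j, r' i j = 0) ->
  RCF r'.
Proof.
move=> [Rr Rc] r'E; split=> i.
  case: (r'E i) => [[q _ r'q] | r'0]; last by exists 0%N.
  by case: (Rr q) => N rN; exists N => j /rN <-.
case: (Rc i) => N rN; exists (\max_(q < N) h q).+1 => l Nl.
case: (r'E l) => [[q hq ->] | -> //]; apply: rN; rewrite leqNgt; apply/negP => qN.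
by move: Nl; rewrite -hq ltnNge (leq_bigmax (Ordinal qN)).
Qed.

End Product.

Section ShiftMatrix.
Variables (k : fieldType) (s : nat -> nat) (x : nmx k).
Hypothesis s_gt : forall c, (c < s c)%N.
Hypothesis s_inj : injective s.
Hypothesis xE : forall i c, x i c = if s c == i then 1 else 0.
Implicit Types (m r : nmx k).

Local Notation I_x := (nmxsub (nmx1 k) x).
Local Notation I_xt := (nmxsub (nmx1 k) (nmxtr x)).

Lemma shift_row0 i l : (i <= l)%N -> x i l = 0.
Proof.
by move=> il; rewrite xE ifF //; apply/negbTE; rewrite neq_ltn (leq_ltn_trans il) ?orbT.
Qed.

Lemma mul_shift_im r c j : nmxmul x r (s c) j = r c j.
Proof.
rewrite (nmxmulE _ _ (K := s c)); last by move=> l; apply: shift_row0.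
rewrite -(@sum_ord_delta _ (r^~ j) c (s c)) //; apply: eq_bigr => l _.
by rewrite xE (inj_eq s_inj).
Qed.

Lemma mul_shift_notim r i j : (forall c, s c <> i) -> nmxmul x r i j = 0.
Proof.
move=> noti; rewrite (nmxmulE _ _ (K := 0%N)) ?big_ord0 // => l _.
by rewrite xE ifF //; apply/eqP/noti.
Qed.

Lemma mul_1Bshift r i j : nmxmul I_x r i j = r i j - nmxmul x r i j.
Proof.
have x0 l : (i < l)%N -> x i l = 0 by move/ltnW; apply: shift_row0.
rewrite (nmxmulE _ _ (K := i.+1)); last first.
  by move=> l il; rewrite /nmxsub /nmx1 x0 // ifF ?subr0 // ltn_eqF.
rewrite (nmxmulE _ _ (K := i.+1)) // /nmxsub.
under eq_bigr do rewrite mulrBl; rewrite sumrB -(@sum_ord_delta _ (r^~ j) i i.+1) //.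
by congr (_ - _); apply: eq_bigr => l _; rewrite /nmx1 eq_sym.
Qed.

Lemma mul_1Bshift_tr r i j : nmxmul I_xt r i j = r i j - r (s i) j.
Proof.
rewrite (nmxmulE _ _ (K := (s i).+1)); last first.
  move=> l sil; have il := ltn_trans (s_gt i) sil.
  by rewrite /nmxsub /nmx1 /nmxtr xE (ltn_eqF il) (ltn_eqF sil) subr0.
rewrite /nmxsub; under eq_bigr do rewrite mulrBl; rewrite sumrB.
rewrite -(@sum_ord_delta _ (r^~ j) i (s i).+1) ?(ltn_trans (s_gt i)) //.
rewrite -(@sum_ord_delta _ (r^~ j) (s i) (s i).+1) //.
by congr (_ - _); apply: eq_bigr => l _; rewrite /nmx1 /nmxtr ?xE eq_sym.
Qed.

Lemma RCF_mul_shift r : RCF r -> RCF (nmxmul x r).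
Proof.
move=> Rr; apply: RCF_row_select Rr _ => i.
case: (classic (exists c, s c = i)) => [[c <-] | noti].
  by left; exists c => // j; rewrite mul_shift_im.
by right=> j; rewrite mul_shift_notim // => c sc; apply: noti; exists c.
Qed.

Lemma ideal_1Bshift_tr m : inRideal I_x m -> inRideal I_xt m.
Proof.
case=> r [Rr mE]; exists (fun i j => - nmxmul x r i j); split.
  exact/RCF_opp/RCF_mul_shift.
by move=> i j; rewrite mul_1Bshift_tr mE mul_1Bshift mul_shift_im opprK addrC.
Qed.

Lemma quot_hom_1Bshift_tr : quot_hom I_x I_xt id.
Proof.
split=> // [m n _ _ | m n _ _ | m r _ _]; first exact: ideal_1Bshift_tr.
all: by apply: inRideal0 => i j; rewrite /nmxsub subrr.
Qed.

(* [chain i = Some q] says that row [i] is [head q], the first element of the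
   [q]-th maximal [s]-chain; the heads are exactly the rows outside the image of [s]. *)
Section Heads.
Variables (chain : nat -> option nat) (head : nat -> nat).
Hypothesis chain_notim : forall i q, chain i = Some q -> forall c, s c <> i.
Hypothesis chain_im : forall i, chain i = None -> exists c, s c = i.
Hypothesis chain_head : forall i q, chain i = Some q -> head q = i.
Hypothesis head_ge : forall q, (q <= head q)%N.

Definition to_heads m : nmx k := fun i j => if chain i is Some q then m q j else 0.

Lemma chain_s c : chain (s c) = None.
Proof. by case E: (chain (s c)) => [q|] //; case: (chain_notim E (erefl (s c))). Qed.

Lemma RCF_to_heads m : RCF m -> RCF (to_heads m).
Proof.
move=> Rm; apply: (RCF_row_select (h := head) Rm) => i; rewrite /to_heads.
by case E: (chain i) => [q|]; [left; exists q; rewrite ?(chain_head E) | right].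
Qed.

Lemma to_heads_in_1Bshift_tr m : RCF m -> inRideal I_xt (to_heads m).
Proof.
move=> Rm; exists (to_heads m); split; first exact: RCF_to_heads.
by move=> i j; rewrite mul_1Bshift_tr {3}/to_heads chain_s subr0.
Qed.

(* If [to_heads m = (1 - x) r] then [r] is constant, equal to row [q] of [m],
   along the [s]-orbit of [head q]; this orbit leaves every bound, so column
   finiteness of [r] forces row [q] of [m] to vanish. *)
Lemma to_heads_in_1Bshift m i q j :
  inRideal I_x (to_heads m) -> chain i = Some q -> m q j = 0.
Proof.
case=> r [[_ Rc] mE] Ei.
have r_head : r i j = m q j.
  move: (mE i j); rewrite mul_1Bshift mul_shift_notim ?subr0 /to_heads ?Ei //.
  exact: chain_notim Ei.
have r_step c : r (s c) j = r c j.
  move: (mE (s c) j); rewrite mul_1Bshift mul_shift_im /to_heads chain_s.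
  by move/eqP; rewrite eq_sym subr_eq0 => /eqP.
have r_orbit n : r (iter n s i) j = m q j by elim: n => //= n <-; apply: r_step.
have iter_ge n : (n <= iter n s i)%N.
  by elim: n => //= n IH; apply: leq_ltn_trans IH (s_gt _).
by case: (Rc j) => N rN; rewrite -(r_orbit N) rN.
Qed.

Lemma ker_1Bshift_tr (n : nmx k) : inRideal I_xt n ->
  exists m, RCF m /\ eqmod I_x (to_heads m) n.
Proof.
case=> r [Rr nE]; exists (fun q j => r (head q) j); split.
  exact: RCF_comp_rows head_ge Rr.
exists (fun i j => r (s i) j); split; first exact: RCF_comp_rows (fun i => ltnW (s_gt i)) Rr.
move=> i j; rewrite /nmxsub nE mul_1Bshift_tr mul_1Bshift /to_heads.
case E: (chain i) => [q|].
  rewrite (chain_head E) mul_shift_notim; last exact: chain_notim E.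
  by rewrite subr0 opprB addrC subrK.
by case: (chain_im E) => c <-; rewrite mul_shift_im sub0r opprB.
Qed.

Variable x0 : nmx k.
Hypothesis ideal_heads0 :
  forall m, inRideal x0 m -> forall i q j, chain i = Some q -> m q j = 0.
Hypothesis heads0_ideal :
  forall m, RCF m -> (forall i q j, chain i = Some q -> m q j = 0) -> inRideal x0 m.

Lemma quot_hom_to_heads : quot_hom x0 I_x to_heads.
Proof.
split=> [m | m n _ _ mn | m n _ _ | m r [Rm _] _]; first exact: RCF_to_heads.
- apply: inRideal0 => i j; rewrite /nmxsub /to_heads.
  case E: (chain i) => [q|]; last by rewrite subrr.
  exact: ideal_heads0 mn _ _ _ E.
- apply: inRideal0 => i j; rewrite /nmxsub /nmxadd /to_heads.
  by case: (chain i) => [q|]; rewrite ?addr0 subrr.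
apply: inRideal0 => i j; rewrite /nmxsub.
case E: (chain i) => [q|].
  case: (Rm q) => N mN; rewrite {1}/to_heads E (nmxmulE _ _ (K := N)) //.
  by rewrite (nmxmulE _ _ (K := N)) => [|l /mN]; rewrite /to_heads E ?subrr.
rewrite {1}/to_heads E (nmxmulE _ _ (K := 0%N)) ?big_ord0 ?subrr // => l _.
by rewrite /to_heads E.
Qed.

Lemma short_exact_to_heads : short_exact x0 I_x I_xt to_heads id.
Proof.
split; [exact: quot_hom_to_heads | exact: quot_hom_1Bshift_tr | | split | ].
- by move=> m Rm mx; apply: heads0_ideal => // i q j; apply: to_heads_in_1Bshift.
- exact: to_heads_in_1Bshift_tr.
- by move=> n _; apply: ker_1Bshift_tr.
- by move=> n Rn; exists n; split=> //; apply: inRideal0 => i j; rewrite /nmxsub subrr.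
Qed.

End Heads.

End ShiftMatrix.

Definition chainA (i : nat) : option nat := if i is 0 then Some 0%N else None.

Lemma short_exact_A (k : fieldType) :
  short_exact (mxA k) (nmxsub (nmx1 k) (mxA k)) (nmxsub (nmx1 k) (nmxtr (mxA k)))
    (to_heads chainA) id.
Proof.
have xE i c : mxA k i c = if c.+1 == i then 1 else 0 by rewrite /mxA eq_sym.
have row0 (r : nmx k) j : nmxmul (mxA k) r 0 j = 0.
  by rewrite (nmxmulE _ _ (K := 0%N)) ?big_ord0.
apply: (@short_exact_to_heads _ succn _ _ succn_inj xE _ id) => //.
- by case.
- by case=> // i _; exists i.
- by case=> // q [<-].
- by move=> m [r [_ mE]] [|i] q j // [<-]; rewrite mE row0.
move=> m Rm m0; exists (fun i j => m i.+1 j); split; first exact: RCF_comp_rows Rm.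
by case=> [|i] j; rewrite ?row0 ?(m0 0%N 0%N) ?(mul_shift_im _ succn_inj xE).
Qed.

Lemma binS2 n : 'C(n.+2, 2) = ('C(n.+1, 2) + n.+1)%N.
Proof. by rewrite binS bin1. Qed.

(* The rows of [mxB] are cut into consecutive blocks [['C(n.+1, 2), 'C(n.+2, 2))] of
   length [n.+1], and [mxB] maps position [i] of block [n] to position [i] of block
   [n.+1]; the heads are the last positions of the blocks. *)
Fixpoint block (c : nat) : nat :=
  if c is c'.+1 then
    if c'.+1 == 'C((block c').+2, 2) then (block c').+1 else block c'
  else 0.

Lemma block_bounds c : ('C((block c).+1, 2) <= c < 'C((block c).+2, 2))%N.
Proof.
elim: c => [|c IH] //=; case: eqP => [cE|]; last by move: IH; lia.
by rewrite (binS2 (block c).+1) -cE; lia.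
Qed.

Lemma block_eq b c : ('C(b.+1, 2) <= c < 'C(b.+2, 2))%N -> block c = b.
Proof.
have := block_bounds c; set b' := block c => cb' cb.
case: (ltngtP b' b) => // [lt | lt].
  by have := leq_bin2l 2 (lt : (b'.+2 <= b.+1)%N); lia.
by have := leq_bin2l 2 (lt : (b.+2 <= b'.+1)%N); lia.
Qed.

Definition sB (c : nat) : nat := (c + (block c).+1)%N.

Lemma block_sB c : block (sB c) = (block c).+1.
Proof. by apply: block_eq; move: (block_bounds c); rewrite /sB !binS2; lia. Qed.

Lemma sB_inj : injective sB.
Proof.
move=> a b eab; have /succn_inj bab : (block a).+1 = (block b).+1 by rewrite -!block_sB eab.
by move: eab; rewrite /sB bab; lia.
Qed.

Lemma mxB_sB (k : fieldType) r c : mxB k r c = if sB c == r then 1 else 0.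
Proof.
rewrite /mxB; congr (if _ then _ else _); apply/idP/eqP.
- case/existsP=> [[[|n] ltn]] /existsP[[i ltin]] //= /andP[/eqP -> /eqP ->].
  rewrite /= in ltin; rewrite /sB.
  have -> : block ('C(n.+1, 2) + i) = n by apply: block_eq; rewrite binS2; lia.
  by rewrite binS2; lia.
- move=> rE; have := block_bounds c; rewrite binS2 => cb.
  have ltn : ((block c).+1 < r.+1)%N by rewrite -rE /sB; lia.
  have lti : (c - 'C((block c).+1, 2) < (block c).+1)%N by lia.
  apply/existsP; exists (Ordinal ltn); apply/existsP; exists (Ordinal lti) => /=.
  by rewrite -rE /sB binS2; apply/andP; split; apply/eqP; lia.
Qed.

Definition headB (q : nat) : nat := ('C(q.+1, 2) + q)%N.

Lemma block_headB q : block (headB q) = q.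
Proof. by apply: block_eq; rewrite /headB binS2; lia. Qed.

Definition chainB (i : nat) : option nat :=
  if i == headB (block i) then Some (block i) else None.

Lemma short_exact_B (k : fieldType) :
  short_exact (nmx0 k) (nmxsub (nmx1 k) (mxB k)) (nmxsub (nmx1 k) (nmxtr (mxB k)))
    (to_heads chainB) id.
Proof.
apply: (@short_exact_to_heads _ sB _ _ sB_inj (@mxB_sB k) _ headB).
- by move=> c; rewrite /sB; lia.
- move=> i q; rewrite /chainB; case: eqP => // iE _ c ciE; move: iE.
  by rewrite -ciE block_sB; have := block_bounds c; rewrite /headB /sB !binS2; lia.
- move=> i; rewrite /chainB; case: eqP => // niE _.
  have := block_bounds i; case bi: (block i) niE => [|b] niE.
    by rewrite /headB bin_small // in niE; rewrite bin_small // binn; lia.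
  rewrite /headB binS2 in niE; rewrite !binS2 => ib; exists (i - b.+1)%N.
  rewrite /sB; have -> : block (i - b.+1) = b by apply: block_eq; rewrite binS2; lia.
  lia.
- by move=> i q; rewrite /chainB; case: eqP => // -> [<-]; rewrite block_headB.
- by move=> q; rewrite /headB; lia.
- move=> m [r [_ mE]] i q j _; rewrite mE /nmxmul big1 // => l _.
  by rewrite /nmx0 mul0r.
move=> m _ m0; apply: inRideal0 => q j; apply: (m0 (headB q)).
by rewrite /chainB block_headB eqxx.
Qed.

Theorem proposition7p11 (k : fieldType) :
  (exists F G : nmx k -> nmx k,
      short_exact (mxA k) (nmxsub (nmx1 k) (mxA k))
                  (nmxsub (nmx1 k) (nmxtr (mxA k))) F G) /\
  (exists F G : nmx k -> nmx k,
      short_exact (nmx0 k) (nmxsub (nmx1 k) (mxB k))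
                  (nmxsub (nmx1 k) (nmxtr (mxB k))) F G).
Proof. by split; do 2!eexists; [apply: short_exact_A | apply: short_exact_B]. Qed.
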